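(* Let $N=pq$ with $p,q$ distinct primes. Let $d\in\mathbb{N}$ and $b_1,\dots,b_d\in\mathbb{Z}$. For each $i$ let $f_i=l_iX+c_i\in\mathbb{Z}[X]$ be a polynomial of degree $1$ with $f_i(b_i)=N$. If $\gcd(c_i,N)=1$ for every $i$ and $\gcd(b_j-b_k,N)=1$ for all $j,k\in\{1,\dots,d\}$ with $j\neq k$, then \[\nu\Big(\prod_{i=1}^d f_i\Big)=dp+dq-2d^2.\]
   Context: $Z_N=\{0,1,\dots,N-1\}$. For $g\in\mathbb{Z}[X]$, an element $x\in Z_N$ is called suitable for $g$ if $1<\gcd(g(x),N)<N$, and $\nu(g)$ denotes the number of $x\in Z_N$ suitable for $g$. *)

From mathcomp Require Import all_boot all_order all_algebra.
Set Implicit Arguments. Unset Strict Implicit. Unset Printing Implicit Defensive.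
Import GRing.Theory Num.Theory.
Local Open Scope ring_scope.

Definition suitable (N : nat) (g : {poly int}) (x : nat) : bool :=
  (1 < gcdn `|g.[x%:Z]|%N N < N)%N.

Definition nu (N : nat) (g : {poly int}) : nat :=
  #|[set x : 'I_N | suitable N g x]|.

From mathcomp Require Import all_boot all_order all_algebra.
From mathcomp Require Import ring.
Import GRing.Theory Num.Theory.

Set Implicit Arguments.
Unset Strict Implicit.
Unset Printing Implicit Defensive.

(* For a prime p dividing N = l b + c with p not dividing c, p does not divide
   l either, so p divides l x + c = l (x - b) + N exactly when x = b mod p.
   Hence p divides g(x) = prod_i (l_i x + c_i) exactly when x mod p lies in the
   set A_p of residues of the b_i, which has d elements because the b_i are
   pairwise incongruent mod p.  A residue x mod pq is suitable for g exactly
   when one, and only one, of p and q divides g(x); through the Chinese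
   remainder bijection Z_pq = Z_p x Z_q these are the pairs in
   (A_p x ~A_q) u (~A_p x A_q), of which there are d (q - d) + (p - d) d. *)

Lemma proper_gcdn_mul_primes (p q m : nat) : prime p -> prime q -> p != q ->
  (1 < gcdn m (p * q) < p * q) = ((p %| m) != (q %| m)).
Proof.
move=> p_pr q_pr p_neq_q.
have pq_coprime : coprime p q by rewrite prime_coprime // dvdn_prime2.
have pq_gt0 : 0 < p * q by rewrite muln_gt0 !prime_gt0.
have -> : (gcdn m (p * q) < p * q) = ~~ ((p %| m) && (q %| m)).
  rewrite -Gauss_dvd // ltn_neqAle dvdn_leq ?dvdn_gcdr // andbT.
  by congr negb; apply/eqP/gcdn_idPr.
have -> : (1 < gcdn m (p * q)) = (p %| m) || (q %| m).
  have : 0 < gcdn m (p * q) by rewrite gcdn_gt0 pq_gt0 orbT.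
  rewrite -[_ || _]negbK negb_or -!prime_coprime // -coprimeMl coprime_sym.
  by rewrite /coprime; case: gcdn => [|[|]].
by case: (p %| m); case: (q %| m).
Qed.

Local Open Scope ring_scope.

Lemma prime_dvd_horner_prod (I : finType) (F : I -> {poly int}) (p : nat) (x : int) :
  prime p -> (p %| `|(\prod_i F i).[x]|)%N = [exists i, p %| `|(F i).[x]|]%N.
Proof.
move=> p_pr.
by rewrite horner_prod (big_morph absz abszM (erefl _)) Euclid_dvd_prod // big_orE.
Qed.

Lemma prime_ndvd_coprimez (p : nat) (N z : int) :
  prime p -> (p %| N)%Z -> gcdz z N = 1 -> ~~ (p %| z)%Z.
Proof.
move=> p_pr p_dvdN zN_coprime; apply/negP => p_dvdz.
have : (p %| gcdz z N)%Z by rewrite dvdz_gcd p_dvdz.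
by rewrite zN_coprime dvdz1 => /eqP p_eq1; rewrite -[p]/`|p%:Z|%N p_eq1 in p_pr.
Qed.

Lemma prime_dvd_linear_eval (p : nat) (N l b c x : int) :
  prime p -> (p %| N)%Z -> ~~ (p %| c)%Z -> l * b + c = N ->
  (p %| (l%:P * 'X + c%:P).[x])%Z = (x == b %[mod p])%Z.
Proof.
move=> p_pr p_dvdN p_ndvdc lbcN.
have p_ndvdl : ~~ (p %| `|l|)%N.
  apply: contra p_ndvdc => p_dvdl.
  by rewrite -[c](addKr (l * b)) lbcN rpredD ?rpredN ?dvdz_mulr.
have -> : (l%:P * 'X + c%:P).[x] = l * (x - b) + N
  by rewrite !hornerE -lbcN mulrBr addrA subrK.
by rewrite rpredDr // eqz_mod_dvd dvdzE abszM Euclid_dvdM // (negbTE p_ndvdl).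
Qed.

Section ResidueOrdinal.

Variables (p : nat) (p_gt0 : (0 < p)%N).

Lemma absz_modz_lt (z : int) : (`|(z %% p)%Z| < p)%N.
Proof.
by rewrite -ltz_nat gez0_abs ?ltz_pmod ?modz_ge0 // -?lt0n ?ltz_nat // eqz_nat -lt0n.
Qed.

Definition zmod_ord (z : int) : 'I_p := Ordinal (absz_modz_lt z).

Lemma zmod_ord_eq (y z : int) : (zmod_ord y == zmod_ord z) = (y == z %[mod p])%Z.
Proof.
have p_neq0 : p%:Z != 0 by rewrite eqz_nat -lt0n.
by rewrite -val_eqE /= -eqz_nat !gez0_abs ?modz_ge0.
Qed.

Definition residues_of (d : nat) (b : nat -> int) : {set 'I_p} :=
  [set zmod_ord (b i) | i : 'I_d].

End ResidueOrdinal.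

Lemma crt_ord_injective (p q : nat) (p_gt0 : (0 < p)%N) (q_gt0 : (0 < q)%N) :
  coprime p q ->
  injective (fun x : 'I_(p * q) => (zmod_ord p_gt0 x, zmod_ord q_gt0 x)).
Proof.
move=> pq_coprime x y crt_xy.
have /eqP := congr1 fst crt_xy; have /eqP := congr1 snd crt_xy.
rewrite !zmod_ord_eq !modz_nat !eqz_nat => xy_modq xy_modp.
apply: val_inj; rewrite /= -(modn_small (ltn_ord x)) -(modn_small (ltn_ord y)).
by apply/eqP; rewrite chinese_remainder // xy_modp xy_modq.
Qed.

Lemma card_xor_setX (T1 T2 : finType) (A : {set T1}) (B : {set T2}) :
  #|[set y | (y.1 \in A) != (y.2 \in B)]| = (#|A| * #|~: B| + #|~: A| * #|B|)%N.
Proof.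
have -> : [set y | (y.1 \in A) != (y.2 \in B)] = setX A (~: B) :|: setX (~: A) B.
  by apply/setP => -[y1 y2]; rewrite !inE; case: (y1 \in A); case: (y2 \in B).
rewrite cardsU.
have -> : setX A (~: B) :&: setX (~: A) B = set0.
  by apply/setP => -[y1 y2]; rewrite !inE; case: (y1 \in A); rewrite ?andbF.
by rewrite cards0 subn0 !cardsX.
Qed.

Section RootsModPrime.

Variables (N p d : nat) (b l c : nat -> int).
Hypotheses (p_pr : prime p) (p_dvdN : (p %| N)%N) (p_gt0 : (0 < p)%N).
Hypothesis lbcN : forall i, (i < d)%N -> l i * b i + c i = N%:Z.
Hypothesis cN_coprime : forall i, (i < d)%N -> gcdz (c i) N%:Z = 1.

Lemma prime_dvd_prod_linear_eval (x : int) :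
  (p %| `|(\prod_(i < d) ((l i)%:P * 'X + (c i)%:P)).[x]|)%N =
  (zmod_ord p_gt0 x \in residues_of p_gt0 d b).
Proof.
have root_mod (i : 'I_d) :
    (p %| `|((l i)%:P * 'X + (c i)%:P).[x]|)%N = (x == b i %[mod p])%Z.
  have p_dvdNz : (p %| N%:Z)%Z by [].
  have p_ndvdc := prime_ndvd_coprimez p_pr p_dvdNz (cN_coprime (ltn_ord i)).
  exact: (prime_dvd_linear_eval x p_pr p_dvdNz p_ndvdc (lbcN (ltn_ord i))).
rewrite prime_dvd_horner_prod //.
apply/existsP/imsetP => [[i root_i] | [i _ /eqP root_i]]; exists i => //.
- by apply/eqP; rewrite zmod_ord_eq -root_mod.
- by rewrite root_mod -zmod_ord_eq.
Qed.

Lemma card_residues_of :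
  (forall j k, (j < d)%N -> (k < d)%N -> j != k -> gcdz (b j - b k) N%:Z = 1) ->
  #|residues_of p_gt0 d b| = d.
Proof.
move=> b_incongr; rewrite card_imset ?card_ord // => j k /eqP.
rewrite zmod_ord_eq eqz_mod_dvd => p_dvd_bjk.
apply/eqP; apply: contraTT p_dvd_bjk => j_neq_k.
exact: prime_ndvd_coprimez p_pr _ (b_incongr j k (ltn_ord j) (ltn_ord k) j_neq_k).
Qed.

End RootsModPrime.

Theorem theorem2p9 (p q : nat) (d : nat) (b l c : nat -> int) :
  prime p -> prime q -> p != q ->
  (forall i, (i < d)%N -> l i != 0) ->
  (forall i, (i < d)%N -> l i * b i + c i = (p * q)%:Z) ->
  (forall i, (i < d)%N -> gcdz (c i) (p * q)%:Z = 1) ->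
  (forall j k, (j < d)%N -> (k < d)%N -> j != k ->
     gcdz (b j - b k) (p * q)%:Z = 1) ->
  (nu (p * q) (\prod_(i < d) ((l i)%:P * 'X + (c i)%:P)))%:Z =
    (d * p)%:Z + (d * q)%:Z - 2 * (d%:Z) ^+ 2.
Proof.
move=> p_pr q_pr p_neq_q _ lbcN cN_coprime b_incongr.
have [p_gt0 q_gt0] := (prime_gt0 p_pr, prime_gt0 q_pr).
have pq_coprime : coprime p q by rewrite prime_coprime // dvdn_prime2.
have [p_dvd_pq q_dvd_pq] := (dvdn_mulr q (dvdnn p), dvdn_mull p (dvdnn q)).
pose crt (x : 'I_(p * q)) := (zmod_ord p_gt0 x, zmod_ord q_gt0 x).
have crt_inj : injective crt := crt_ord_injective pq_coprime.
have crt_bij : bijective crt by apply: inj_card_bij crt_inj _; rewrite card_prod !card_ord.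
set A := residues_of p_gt0 d b; set B := residues_of q_gt0 d b.
have -> : nu (p * q) (\prod_(i < d) ((l i)%:P * 'X + (c i)%:P)) =
          #|[set y | (y.1 \in A) != (y.2 \in B)]|.
  rewrite /nu -(on_card_preimset (onW_bij _ crt_bij)); apply: eq_card => x.
  rewrite !inE /suitable proper_gcdn_mul_primes //.
  by rewrite (prime_dvd_prod_linear_eval p_pr p_dvd_pq p_gt0 lbcN cN_coprime)
             (prime_dvd_prod_linear_eval q_pr q_dvd_pq q_gt0 lbcN cN_coprime).
rewrite card_xor_setX.
have cardA : #|A| = d := card_residues_of p_pr p_dvd_pq p_gt0 b_incongr.
have cardB : #|B| = d := card_residues_of q_pr q_dvd_pq q_gt0 b_incongr.
have dp : (d * p = d * (d + #|~: A|))%N by rewrite -[in (d + _)%N]cardA cardsC card_ord.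
have dq : (d * q = d * (d + #|~: B|))%N by rewrite -[in (d + _)%N]cardB cardsC card_ord.
by rewrite cardA cardB dp dq !PoszD !PoszM expr2; ring.
Qed.
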